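(* Let $L$ be a finite unramified extension of $\mathbb Q_\ell$ with ring of integers $S$, and let $\nu$ be the valuation on $L$ normalized by $\nu(\ell)=1$. Let $T$ be a free $S$-module of finite rank $d$ and $x$ an $S$-linear endomorphism of $T$ whose reduction $\bar x$ on $T/\ell T$ is nilpotent. Let $Q(t)=\det(t-x\mid T\otimes_S L)\in S[t]$. Then the Newton polygon $\mathrm{Np}(Q)$ lies on or above the Young polygon $\mathrm{Hp}(x|T)$.
   Context: Young polygon: for a nilpotent $d\times d$ matrix (or endomorphism) $N$ over a field with Jordan block sizes $m_1\ge m_2\ge\dots\ge m_r$ (so $\sum m_j=d$), $\mathrm{Hp}(N)$ is the piecewise linear function on $[0,d]$ whose graph is the polygon with vertices $(\sum_{j=1}^i m_j,\, i)$, $0\le i\le r$; its slopes are $1/m_1\le\dots\le 1/m_r$. We write $\mathrm{Hp}(N)=(m_1,\dots,m_r)$. For $x$ an $S$-linear endomorphism of a free $S$-module $T$ inducing a nilpotent endomorphism of the $S/\ell S$-vector space $T/\ell T$, $\mathrm{Hp}(x|T)$ denotes the Young polygon of that induced endomorphism. Newton polygon: for $Q(t)=\sum_{i=0}^d Q_it^{d-i}$ monic of degree $d$ over $L$ (with $\nu(0)=+\infty$), $\mathrm{Np}(Q)$ is the largest convex function $\phi$ on $[0,d]$ with $\phi(i)\le \nu(Q_i)$ for all $0\le i\le d$ (the lower boundary of the convex hull of the points $(i,\nu(Q_i))$). ''$\mathrm{Np}(Q)$ lies on or above $\mathrm{Hp}(N)$'' means $\mathrm{Np}(Q)(s)\ge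 \mathrm{Hp}(N)(s)$ for all $s\in[0,d]$. *)

From HB Require Import structures.
From mathcomp Require Import all_boot all_order all_algebra.
Set Implicit Arguments. Unset Strict Implicit. Unset Printing Implicit Defensive.
Import Order.TTheory GRing.Theory Num.Theory.
Local Open Scope ring_scope.

(* The ring S = ring of integers of a finite unramified extension L of Q_l *)
(* is described axiomatically (Q_l is not available in MathComp):          *)
(* S is a complete discrete valuation ring of characteristic 0 whose        *)
(* maximal ideal is generated by l, with finite residue field k; red is     *)
(* the reduction map S -> k = S/lS.  By Cohen's structure theory these are  *)
(* exactly (up to isomorphism) the rings W(F_q) = O_L, L/Q_l unramified.    *)

(* [vals p a n] : a = p^n * u with u a unit, i.e. nu(a) = n where nu is the
   valuation with nu(p) = 1.  For a = 0 no n satisfies it (nu(0) = +oo). *)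
Definition vals (S : idomainType) (p a : S) (n : nat) : Prop :=
  exists2 u : S, u \is a GRing.unit & a = p ^+ n * u.

Definition dvd_pow (S : idomainType) (p a : S) (n : nat) : Prop :=
  exists c : S, a = p ^+ n * c.

Record unram_int_ring (S : idomainType) (l : nat) (k : finFieldType)
    (red : {rmorphism S -> k}) : Prop := {
  uir_prime : prime l;
  uir_char0 : forall n : nat, (n%:R : S) = 0 -> n = 0%N;
  uir_nonunit : (l%:R : S) \isn't a GRing.unit;
  uir_dvr : forall a : S, a != 0 -> exists n, vals (l%:R) a n;
  uir_complete : forall f : nat -> S,
      (forall n, dvd_pow (l%:R) (f n.+1 - f n) n) ->
      exists a : S, forall n, dvd_pow (l%:R) (a - f n) n;
  uir_red_surj : forall y : k, exists a : S, red a = y;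
  uir_red_ker : forall a : S, red a = 0 <-> dvd_pow (l%:R) a 1
}.

Definition psums (m : seq nat) : seq nat :=
  [seq sumn (take i m) | i <- iota 1 (size m)].

(* nilpotent Jordan matrix with blocks of sizes m (1's on the superdiagonal
   inside each block, 0 elsewhere) *)
Definition jordan_nil_mx (F : fieldType) (d : nat) (m : seq nat) : 'M[F]_d :=
  \matrix_(i < d, j < d)
     (((j : nat) == (i : nat).+1) && ((j : nat) \notin psums m))%:R.

Definition jordan_type (F : fieldType) (d : nat) (N : 'M[F]_d) (m : seq nat)
  : Prop :=
  [/\ sorted geq m, all (fun a => 0 < a)%N m, sumn m = d &
      exists2 P : 'M[F]_d, P \in unitmx & P *m N *m invmx P = @jordan_nil_mx F d m].

(* The Young polygon Hp = (m_1,...,m_r): the piecewise linear function with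
   vertices (m_1+...+m_i, i).  For s in [P_i, P_{i+1}] (P_i = m_1+..+m_i)
   this sum equals i + (s - P_i)/m_{i+1}. *)
Definition clamp01 (R : realFieldType) (v : R) : R := Num.min 1 (Num.max 0 v).

Definition Hp (R : realFieldType) (m : seq nat) (s : R) : R :=
  \sum_(j < size m)
     clamp01 ((s - (sumn (take j m))%:R) / (nth 0%N m j)%:R).

(* Newton polygon.  Q(t) = sum_i Q_i t^(d-i), so Q_i = Q`_(d-i).            *)
(* Np(Q) is the largest convex function on [0,d] with phi(i) <= nu(Q_i),    *)
(* i.e. pointwise the supremum of all such convex minorants.               *)
(* [Np_ge p Q d s h] says Np(Q)(s) >= h, i.e. sup_phi phi(s) >= h.          *)
Definition convex_on (R : realFieldType) (a b : R) (phi : R -> R) : Prop :=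
  forall x y t : R, a <= x <= b -> a <= y <= b -> 0 <= t <= 1 ->
    phi (t * x + (1 - t) * y) <= t * phi x + (1 - t) * phi y.

Definition Np_minorant (S : idomainType) (R : realFieldType) (p : S)
    (Q : {poly S}) (d : nat) (phi : R -> R) : Prop :=
  convex_on 0 d%:R phi /\
  (forall i : nat, (i <= d)%N -> forall n : nat,
      vals p Q`_(d - i) n -> phi i%:R <= n%:R).

Definition Np_ge (S : idomainType) (R : realFieldType) (p : S)
    (Q : {poly S}) (d : nat) (s h : R) : Prop :=
  forall eps : R, 0 < eps ->
    exists phi : R -> R, Np_minorant p Q d phi /\ h - eps < phi s.

From HB Require Import structures.
From mathcomp Require Import all_boot all_order all_algebra perm.
Set Implicit Arguments. Unset Strict Implicit. Unset Printing Implicit Defensive.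
Import Order.TTheory GRing.Theory Num.Theory.
Local Open Scope ring_scope.

(* Conjugating [x] by a lift to [S] of a Jordan basis of its reduction gives a
   matrix [y] with the same characteristic polynomial [Q] whose entries off the
   Jordan superdiagonal are divisible by [l].  A term of the Leibniz expansion
   contributing to [Q_i] uses [i] entries [y k (s k)], [k] ranging over a set [A];
   only those with [k] and [k+1] in [A] and in the same Jordan block can be
   superdiagonal entries, and a block meeting [A] in [a > 0] positions contains at
   most [a - 1] of them.  Hence for every [mu > 0] the line
   [t |-> t / mu + sum_b min(0, 1 - m_b / mu)] lies below every point
   [(i, nu(Q_i))], so it is one of the convex minorants defining [Np(Q)]; for
   [mu = m_j] it extends the [j]-th edge of [Hp], whence [Np(Q) >= Hp]. *)

Section DvdPow.
Variable (S : idomainType) (p : S).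

Lemma dvd_pow0 a : dvd_pow p a 0.
Proof. by exists a; rewrite expr0 mul1r. Qed.

Lemma dvd_pow_zero n : dvd_pow p 0 n.
Proof. by exists 0; rewrite mulr0. Qed.

Lemma dvd_powD a b n : dvd_pow p a n -> dvd_pow p b n -> dvd_pow p (a + b) n.
Proof. by move=> [c ->] [e ->]; exists (c + e); rewrite mulrDr. Qed.

Lemma dvd_powN a n : dvd_pow p a n -> dvd_pow p (- a) n.
Proof. by move=> [c ->]; exists (- c); rewrite mulrN. Qed.

Lemma dvd_powM a b n k :
  dvd_pow p a n -> dvd_pow p b k -> dvd_pow p (a * b) (n + k).
Proof. by move=> [c ->] [e ->]; exists (c * e); rewrite exprD mulrACA. Qed.

Lemma dvd_pow_leq a n k : (k <= n)%N -> dvd_pow p a n -> dvd_pow p a k.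
Proof.
by move=> kn [c ->]; exists (p ^+ (n - k) * c); rewrite mulrA -exprD subnKC.
Qed.

Lemma dvd_pow_sum (I : Type) (r : seq I) (P : pred I) (F : I -> S) n :
  (forall i, P i -> dvd_pow p (F i) n) -> dvd_pow p (\sum_(i <- r | P i) F i) n.
Proof.
move=> dF; elim/big_rec: _ => [|i x Pi]; first exact: dvd_pow_zero.
exact: dvd_powD (dF _ Pi).
Qed.

Lemma dvd_pow_prod (I : Type) (r : seq I) (P : pred I) (F : I -> S)
    (w : I -> nat) :
  (forall i, P i -> dvd_pow p (F i) (w i)) ->
  dvd_pow p (\prod_(i <- r | P i) F i) (\sum_(i <- r | P i) w i).
Proof.
move=> dF; elim/big_rec2: _ => [|i n x Pi]; first exact: dvd_pow0.
exact: dvd_powM (dF _ Pi).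
Qed.

Lemma vals_dvd_powSn a n : p \isn't a GRing.unit -> p != 0 ->
  vals p a n -> ~ dvd_pow p a n.+1.
Proof.
move=> pNunit p0 [u uu ->] [c].
rewrite exprS -mulrA mulrCA => /(mulfI (expf_neq0 n p0)) eu.
by move: uu; rewrite eu unitrM (negbTE pNunit).
Qed.

End DvdPow.

(* A term of the Leibniz expansion of [det ('X - y)] contributing to ['X^e] takes
   ['X] on a set [F] of [e] fixed points of the permutation [s], and [- y k (s k)]
   for [k] outside [F]. *)
Lemma char_poly_coef_dvd_pow (S : idomainType) (p : S) d (y : 'M[S]_d)
    (supp : 'I_d -> 'I_d -> bool) e N :
  (forall i j, ~~ supp i j -> dvd_pow p (y i j) 1) ->
  (forall (s : 'S_d) (F : {set 'I_d}), #|F| = e -> {in F, forall k, s k = k} ->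
      (N <= \sum_(k < d) ((k \notin F) && ~~ supp k (s k)))%N) ->
  dvd_pow p (char_poly y)`_e N.
Proof.
move=> dvd_y count_s; rewrite /char_poly /determinant coef_sum.
apply: dvd_pow_sum => s _.
have entryE i : char_poly_mx y i (s i) = ((i == s i)%:R)%:P * 'X + (- y i (s i))%:P.
  by rewrite !mxE polyCN; case: (i == s i); rewrite ?mul1r ?mul0r ?add0r.
rewrite (eq_bigr _ (fun i _ => entryE i)) bigA_distr.
have sign_dvd (q : {poly S}) : dvd_pow p q`_e N -> dvd_pow p ((-1) ^+ s * q)`_e N.
  by case: (odd_perm s); rewrite ?expr1 ?expr0 ?mulN1r ?mul1r ?coefN //; apply: dvd_powN.
apply: sign_dvd; rewrite coef_sum; apply: dvd_pow_sum => F _.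
pose c i := if i \in F then ((i == s i)%:R : S) else - y i (s i).
have -> : \prod_i (if i \in F then ((i == s i)%:R)%:P * 'X else (- y i (s i))%:P)
     = (\prod_i c i)%:P * 'X ^+ #|F|.
  transitivity (\prod_i ((c i)%:P * (if i \in F then 'X else 1))).
    by apply: eq_bigr => i _; rewrite /c; case: (i \in F); rewrite ?mulr1.
  by rewrite big_split /= rmorph_prod -big_mkcond /= prodr_const.
rewrite coefCM coefXn; have [cardF|_] := eqP; last first.
  by rewrite mulr0n mulr0; apply: dvd_pow_zero.
rewrite mulr1n mulr1.
have [fixF|] := boolP [forall k in F, s k == k]; last first.
  rewrite negb_forall_in => /existsP [k /andP [kF sk]].
  by rewrite (bigD1 k) //= /c kF eq_sym (negbTE sk) mul0r; apply: dvd_pow_zero.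
apply: (dvd_pow_leq (count_s s F (esym cardF) _)).
  by move=> k kF; apply/eqP; move/forall_inP: fixF; apply.
apply: dvd_pow_prod => i _; rewrite /c.
case: (boolP (i \in F)) => iF /=; first exact: dvd_pow0.
case: (boolP (supp i (s i))) => supp_i /=; first exact: dvd_pow0.
exact/dvd_powN/dvd_y.
Qed.

Definition jordan_edge (m : seq nat) (i j : nat) : bool :=
  (j == i.+1) && (j \notin psums m).

Lemma jordan_nil_mxE (F : fieldType) d m (i j : 'I_d) :
  jordan_nil_mx F d m i j = (jordan_edge m i j)%:R.
Proof. by rewrite mxE. Qed.

Definition pref_sum (m : seq nat) (b : nat) : nat := sumn (take b m).

Lemma pref_sum0 m : pref_sum m 0 = 0%N.
Proof. by rewrite /pref_sum take0. Qed.

Lemma pref_sum_size m : pref_sum m (size m) = sumn m.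
Proof. by rewrite /pref_sum take_size. Qed.

Lemma pref_sumS m b :
  (b < size m)%N -> pref_sum m b.+1 = (pref_sum m b + nth 0%N m b)%N.
Proof. by move=> bm; rewrite /pref_sum (take_nth 0%N bm) sumn_rcons. Qed.

Lemma pref_sum_leqS m b : (pref_sum m b <= pref_sum m b.+1)%N.
Proof.
have [bm|mb] := ltnP b (size m); first by rewrite pref_sumS // leq_addr.
by rewrite /pref_sum !take_oversize // ltnW.
Qed.

Lemma pref_sum_monotone m : {homo pref_sum m : b c / (b <= c)%N}.
Proof.
move=> b c /subnK <-; elim: (c - b)%N => // n IH.
by rewrite addSn (leq_trans IH (pref_sum_leqS _ _)).
Qed.

Lemma pref_sumS_psums m b : (b < size m)%N -> pref_sum m b.+1 \in psums m.
Proof. by move=> bm; apply/mapP; exists b.+1; rewrite // mem_iota add1n !ltnS. Qed.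

Lemma sum_over_blocks (g : nat -> nat) m :
  (\sum_(0 <= k < sumn m) g k =
   \sum_(0 <= b < size m) \sum_(pref_sum m b <= k < pref_sum m b.+1) g k)%N.
Proof.
rewrite -pref_sum_size; elim: (size m) => [|c IH]; first by rewrite pref_sum0 !big_geq.
by rewrite big_nat_recr //= -IH -big_cat_nat ?pref_sum_leqS.
Qed.

Lemma adjacent_pairs_leq (f : nat -> bool) o n :
  (\sum_(o <= k < o + n) (f k && f k.+1) + (0 < \sum_(o <= k < o + n.+1) f k)
    <= \sum_(o <= k < o + n.+1) f k)%N.
Proof.
elim: n => [|n IH].
  by rewrite addn0 big_geq // add0n; case: (\sum_(_ <= _ < _) _)%N.
rewrite !addnS in IH *.
rewrite big_nat_recr ?leq_addr //= (big_nat_recr (o + n).+1) ?leqW ?leq_addr //=.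
move: IH; set cnt := (\sum_(o <= k < (o + n).+1) f k)%N.
set pairs := (\sum_(o <= k < o + n) (f k && f k.+1))%N => IH.
case f_last: (f (o + n).+1); last by rewrite !andbF !addn0.
rewrite andbT addn1 ltn0Sn addn1 ltnS.
case f_prev: (f (o + n)) IH; rewrite ?addn0 ?addn1 => IH.
  move: IH; rewrite /cnt big_nat_recr ?leq_addr //= f_prev addn1 ltn0Sn addn1 => IH.
  by apply: leq_trans IH; rewrite -addn1 leq_add2l ltn0Sn.
exact: leq_trans (leq_addr _ _) IH.
Qed.

Lemma block_pairs_leq (f : nat -> bool) m b : (b < size m)%N -> (0 < nth 0%N m b)%N ->
  let a := (\sum_(pref_sum m b <= k < pref_sum m b.+1) f k)%N in
  let g := (\sum_(pref_sum m b <= k < pref_sum m b.+1)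
              (f k && f k.+1 && (k.+1 \notin psums m)))%N in
  (g + (0 < a) <= a)%N /\ (a <= nth 0%N m b)%N.
Proof.
move=> bm; rewrite (pref_sumS bm); case mbE: (nth 0%N m b) => [//|n] _ a g.
split; last first.
  apply: (@leq_trans (\sum_(pref_sum m b <= k < pref_sum m b + n.+1) 1)%N).
    by apply: leq_sum => i _; apply: leq_b1.
  by rewrite sum_nat_const_nat addKn muln1.
apply: leq_trans (adjacent_pairs_leq f (pref_sum m b) n); rewrite leq_add2r /g.
rewrite addnS big_nat_recr ?leq_addr //=.
have -> : ((pref_sum m b + n).+1 \notin psums m) = false.
  by rewrite -addnS -mbE -(pref_sumS bm) pref_sumS_psums.
rewrite andbF addn0; apply: leq_sum => i _.
by case: (f i); case: (f i.+1); case: (_ \notin _).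
Qed.

(* For [mu = m_j] this is the line through the [j]-th edge of [Hp m]. *)
Definition newton_line (R : realFieldType) (m : seq nat) (mu t : R) : R :=
  t / mu + \sum_(0 <= b < size m) Num.min 0 (1 - (nth 0%N m b)%:R / mu).

Lemma block_newton_leq (R : realFieldType) (a g mb : nat) (mu : R) :
  (g + (0 < a) <= a)%N -> (a <= mb)%N -> 0 < mu ->
  a%:R / mu + Num.min 0 (1 - mb%:R / mu) <= a%:R - g%:R.
Proof.
move=> ga amb mu0; have [a0|a_gt0] := posnP a.
  move: ga; rewrite a0 addn0 leqn0 => /eqP ->.
  by rewrite subrr mul0r add0r ge_min lexx.
rewrite a_gt0 addn1 in ga.
have one_le : 1 <= a%:R - g%:R :> R by rewrite lerBrDr addrC natr1 ler_nat.
apply: le_trans one_le.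
have min_le : Num.min 0 (1 - mb%:R / mu) <= 1 - mb%:R / mu by rewrite ge_min lexx orbT.
apply: le_trans (lerD (lexx _) min_le) _.
by rewrite addrCA gerDl subr_le0 ler_pM2r ?invr_gt0 // ler_nat.
Qed.

Lemma newton_line_le_pairs (R : realFieldType) (m : seq nat) (f : nat -> bool) (mu : R) :
  all (fun a => 0 < a)%N m -> 0 < mu ->
  newton_line m mu (\sum_(0 <= k < sumn m) f k)%N%:R
  <= (\sum_(0 <= k < sumn m) f k)%N%:R
     - (\sum_(0 <= k < sumn m) (f k && f k.+1 && (k.+1 \notin psums m)))%N%:R.
Proof.
move=> /(all_nthP 0%N) m_gt0 mu0; rewrite /newton_line.
rewrite !sum_over_blocks !natr_sum mulr_suml -big_split -sumrB /=.
rewrite !big_mkord; apply: ler_sum => b _.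
have [pairs_le a_le] := block_pairs_leq f (ltn_ord b) (m_gt0 _ (ltn_ord b)).
exact: block_newton_leq pairs_le a_le mu0.
Qed.

Lemma newton_line_le_nonedges (R : realFieldType) (m : seq nat) (mu : R)
    (F : {set 'I_(sumn m)}) (s : 'S_(sumn m)) :
  all (fun a => 0 < a)%N m -> 0 < mu -> {in F, forall k, s k = k} ->
  newton_line m mu #|~: F|%:R
  <= (\sum_(k < sumn m) ((k \notin F) && ~~ jordan_edge m k (s k)))%N%:R.
Proof.
move=> m_gt0 mu0 fixF; set d := sumn m in F s fixF *.
pose free (k : nat) := [exists k' : 'I_d, (val k' == k) && (k' \notin F)].
have freeE (k : 'I_d) : free k = (k \notin F).
  apply/existsP/idP => [[k' /andP [/eqP /val_inj -> //]] | kF].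
  by exists k; rewrite eqxx.
set nonedges := (\sum_(k < d) _)%N.
set pairs := (\sum_(0 <= k < d) (free k && free k.+1 && (k.+1 \notin psums m)))%N.
have card_free : (\sum_(0 <= k < d) free k)%N = #|~: F|.
  rewrite big_mkord (eq_bigr (fun k => (k \notin F : nat))) => [|k _]; last by rewrite freeE.
  by rewrite -big_mkcond sum1_card; apply: eq_card => k; rewrite !inE.
(* A free [k] carrying a Jordan edge has [k.+1 = s k] free, as [s] fixes [F]. *)
have free_le : (#|~: F| <= nonedges + pairs)%N.
  rewrite -card_free /nonedges /pairs !big_mkord -big_split /=; apply: leq_sum => k _.
  rewrite freeE; have [//|kF] := boolP (k \in F).
  have [/andP [/eqP sk ps]|//] := boolP (jordan_edge m k (s k)).
  suff -> : free k.+1 by rewrite -sk ps.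
  apply/existsP; exists (s k); apply/andP; split; first exact/eqP.
  apply/negP => skF; move/perm_inj: (fixF _ skF) => skk.
  by move: sk; rewrite skk => /eqP; rewrite eqn_leq ltnn andbF.
have := newton_line_le_pairs free m_gt0 mu0; rewrite -/d card_free -/pairs => /le_trans; apply.
by rewrite lerBlDr -natrD ler_nat.
Qed.

Lemma convex_on_affine (R : realFieldType) (a b c e : R) :
  convex_on a b (fun t => t * c + e).
Proof.
move=> x y t _ _ _; rewrite !mulrDr mulrDl !mulrA addrACA -mulrDl.
by rewrite -mulrDl [t + _]addrC subrK mul1r.
Qed.

Lemma newton_line_minorant (S : idomainType) (p : S) (R : realFieldType)
    (m : seq nat) (y : 'M[S]_(sumn m)) (mu : R) :
  p \isn't a GRing.unit -> p != 0 -> all (fun a => 0 < a)%N m -> 0 < mu ->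
  (forall i j : 'I_(sumn m), ~~ jordan_edge m i j -> dvd_pow p (y i j) 1) ->
  Np_minorant p (char_poly y) (sumn m) (newton_line m mu).
Proof.
move=> pNunit p0 m_gt0 mu0 dvd_y; split; first exact: convex_on_affine.
move=> i le_id n val_n; rewrite leNgt; apply/negP => lt_n.
apply: (vals_dvd_powSn pNunit p0 val_n).
apply: char_poly_coef_dvd_pow dvd_y _ => s F cardF fixF.
rewrite -(ltr_nat R); apply: lt_le_trans lt_n _.
have -> : i = #|~: F| by rewrite cardsCs setCK card_ord cardF subKn.
exact: newton_line_le_nonedges.
Qed.

Section HpTerms.
Variable R : realFieldType.
Implicit Types P mb mu s : R.

Lemma clamp01_le1 v : clamp01 v <= 1 :> R.
Proof. by rewrite /clamp01 ge_min lexx. Qed.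

Lemma clamp01_le v : 0 <= v -> clamp01 v <= v :> R.
Proof. by move=> v0; rewrite /clamp01 (max_r v0) ge_min lexx orbT. Qed.

Lemma clamp01_eq0 v : v <= 0 -> clamp01 v = 0 :> R.
Proof. by move=> v0; rewrite /clamp01 (max_l v0) min_r. Qed.

Lemma Hp_term_le_before P mb mu s : 0 < mb -> 0 < mu -> mu <= mb -> P + mb <= s ->
  clamp01 ((s - P) / mb) <=
  (Num.min (P + mb) s - Num.min P s) / mu + Num.min 0 (1 - mb / mu).
Proof.
move=> mb0 mu0 mumb Ps.
have Ps' : P <= s by apply: le_trans Ps; rewrite lerDl ltW.
rewrite (min_l Ps) (min_l Ps') addrAC subrr add0r min_r; last first.
  by rewrite subr_le0 ler_pdivlMr // mul1r.
by rewrite addrCA subrr addr0 clamp01_le1.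
Qed.

Lemma Hp_term_le_at P mu s : 0 < mu -> P <= s -> s <= P + mu ->
  clamp01 ((s - P) / mu) <=
  (Num.min (P + mu) s - Num.min P s) / mu + Num.min 0 (1 - mu / mu).
Proof.
move=> mu0 Ps sP.
rewrite (min_r sP) (min_l Ps) divff ?gt_eqF // subrr min_l // addr0.
by apply: clamp01_le; rewrite divr_ge0 ?subr_ge0 // ltW.
Qed.

Lemma Hp_term_le_after P mb mu s : 0 < mb -> 0 < mu -> mb <= mu -> s <= P ->
  clamp01 ((s - P) / mb) <=
  (Num.min (P + mb) s - Num.min P s) / mu + Num.min 0 (1 - mb / mu).
Proof.
move=> mb0 mu0 mbmu sP.
have sP' : s <= P + mb by apply: (le_trans sP); rewrite lerDl ltW.
rewrite (min_r sP) (min_r sP') subrr mul0r add0r min_l; last first.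
  by rewrite subr_ge0 ler_pdivrMr // mul1r.
by rewrite clamp01_eq0 // pmulr_lle0 ?invr_gt0 // subr_le0.
Qed.

End HpTerms.

Lemma Hp_le_newton_line (R : realFieldType) (m : seq nat) (s : R) j :
  sorted geq m -> all (fun a => 0 < a)%N m -> (j < size m)%N ->
  (pref_sum m j)%:R <= s <= (pref_sum m j.+1)%:R -> s <= (sumn m)%:R ->
  Hp m s <= newton_line m (nth 0%N m j)%:R s.
Proof.
move=> m_sorted /(all_nthP 0%N) m_gt0 jm /andP [Pjs sPj] sd.
have s0 : 0 <= s by apply: le_trans Pjs.
set mu : R := (nth 0%N m j)%:R.
have mu0 : 0 < mu by rewrite ltr0n m_gt0.
have nth_geq u v : (u <= v)%N -> (v < size m)%N -> (nth 0%N m v <= nth 0%N m u)%N.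
  move=> uv vm; apply: (sorted_leq_nth (rev_trans leq_trans) leqnn 0%N m_sorted) => //.
  by rewrite inE (leq_ltn_trans uv vm).
have s_telescope : s = \sum_(0 <= b < size m)
    (Num.min (pref_sum m b.+1)%:R s - Num.min (pref_sum m b)%:R s).
  by rewrite telescope_sumr // pref_sum_size pref_sum0 (min_r sd) min_l // subr0.
rewrite /newton_line {2}s_telescope mulr_suml -big_split /= /Hp big_mkord.
apply: ler_sum => b _; have bm := ltn_ord b.
rewrite (pref_sumS bm) natrD.
have mb0 : (0 : R) < (nth 0%N m b)%:R by rewrite ltr0n m_gt0.
case: (ltngtP b j) => [bj|jb|bj].
- apply: Hp_term_le_before => //; first by rewrite ler_nat nth_geq // ltnW.
  by apply: le_trans Pjs; rewrite -natrD -pref_sumS // ler_nat pref_sum_monotone.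
- apply: Hp_term_le_after => //; first by rewrite ler_nat nth_geq // ltnW.
  by apply: le_trans sPj _; rewrite ler_nat pref_sum_monotone.
- rewrite /mu -bj in mu0 Pjs sPj *; apply: Hp_term_le_at => //.
  by rewrite -natrD -pref_sumS.
Qed.

Lemma exists_block_around (m : seq nat) (R : realFieldType) (s : R) :
  (0 < size m)%N -> 0 <= s -> s <= (sumn m)%:R ->
  exists2 j, (j < size m)%N & (pref_sum m j)%:R <= s <= (pref_sum m j.+1)%:R.
Proof.
move=> m0 s0 sd.
pose P b := (b < size m)%N && ((pref_sum m b)%:R <= s).
have P0 : exists b, P b by exists 0%N; rewrite /P m0 pref_sum0.
have P_bounded b : P b -> (b <= size m)%N by move=> /andP [/ltnW].
case: (ex_maxnP P0 P_bounded) => j /andP [jm Pjs] jmax.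
exists j => //; rewrite Pjs /=.
have [j1m|] := ltnP j.+1 (size m).
  rewrite leNgt; apply/negP => lt_s.
  by have := jmax j.+1; rewrite /P j1m (ltW lt_s) => /(_ isT); rewrite ltnn.
by rewrite leq_eqVlt ltnNge jm orbF => /eqP <-; rewrite pref_sum_size.
Qed.

Lemma Hp_le_some_newton_line (R : realFieldType) (m : seq nat) (s : R) :
  sorted geq m -> all (fun a => 0 < a)%N m -> 0 <= s <= (sumn m)%:R ->
  exists2 mu : R, 0 < mu & Hp m s <= newton_line m mu s.
Proof.
move=> m_sorted m_gt0 /andP [s0 sd]; have [m_nil|m_cons] := posnP (size m).
  exists 1 => //; move: m_nil => /size0nil ->.
  by rewrite /newton_line /Hp big_ord0 big_geq // addr0 divr1.
have [j jm sj] := exists_block_around m_cons s0 sd.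
by exists (nth 0%N m j)%:R; [rewrite ltr0n (all_nthP 0%N m_gt0) | apply: Hp_le_newton_line].
Qed.

Lemma char_poly_conj (R : comUnitRingType) n (A x : 'M[R]_n) : A \in unitmx ->
  char_poly (A *m x *m invmx A) = char_poly x.
Proof.
move=> Au; rewrite /char_poly.
have -> : char_poly_mx (A *m x *m invmx A) =
    map_mx polyC A *m char_poly_mx x *m map_mx polyC (invmx A).
  rewrite /char_poly_mx mulmxBr mulmxBl -!map_mxM.
  by rewrite mul_mx_scalar -scalemxAl -map_mxM mulmxV // map_mx1 scalemx1.
by rewrite !det_mulmx mulrAC -det_mulmx -map_mxM mulmxV // map_mx1 det1 mul1r.
Qed.

Lemma map_invmx_unit (R : comUnitRingType) (F : fieldType) (f : {rmorphism R -> F})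
    n (A : 'M[R]_n) :
  A \in unitmx -> map_mx f (invmx A) = invmx (map_mx f A).
Proof.
move=> Au; have fAu : map_mx f A \in unitmx.
  by rewrite unitmxE det_map_mx rmorph_unit // -unitmxE.
have inv_fA : map_mx f (invmx A) *m map_mx f A = 1%:M.
  by rewrite -map_mxM mulVmx // map_mx1.
by rewrite -[LHS]mulmx1 -(mulmxV fAu) mulmxA inv_fA mul1mx.
Qed.

Section UnramifiedIntegers.
Variables (S : idomainType) (l : nat) (k : finFieldType) (red : {rmorphism S -> k}).
Hypothesis hS : unram_int_ring l red.

Lemma unram_l_neq0 : (l%:R : S) != 0.
Proof. by apply/eqP => /(uir_char0 hS) l0; move: (uir_prime hS); rewrite l0. Qed.

Lemma unram_unit_of_red a : red a != 0 -> a \is a GRing.unit.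
Proof.
move=> ra; have a0 : a != 0 by apply: contraNneq ra => ->; rewrite rmorph0.
have [[|n] [u uu aE]] := uir_dvr hS a0; first by rewrite aE expr0 mul1r.
case/negP: ra; apply/eqP/(uir_red_ker hS).
by exists (l%:R ^+ n * u); rewrite aE exprS expr1 mulrA.
Qed.

Lemma unram_exists_lift : exists lift : k -> S, cancel lift red.
Proof.
have red_surj z : exists a, red a == z by have [a <-] := uir_red_surj hS z; exists a.
by exists (fun z => xchoose (red_surj z)) => z; apply/eqP/(xchooseP (red_surj z)).
Qed.

Lemma unram_lift_jordan m (x : 'M[S]_(sumn m)) (P : 'M[k]_(sumn m)) :
  P \in unitmx -> P *m map_mx red x *m invmx P = jordan_nil_mx k (sumn m) m ->
  exists2 y : 'M[S]_(sumn m), char_poly y = char_poly x &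
    forall i j : 'I_(sumn m), ~~ jordan_edge m i j -> dvd_pow (l%:R) (y i j) 1.
Proof.
move=> Pu PxJ; have [lift liftK] := unram_exists_lift.
pose Pt := map_mx lift P.
have PtE : map_mx red Pt = P by apply/matrixP => i j; rewrite !mxE liftK.
have Ptu : Pt \in unitmx.
  by rewrite unitmxE unram_unit_of_red // -det_map_mx PtE -unitfE -unitmxE.
exists (Pt *m x *m invmx Pt); first exact: char_poly_conj.
move=> i j not_edge; apply/(uir_red_ker hS).
have := congr1 (fun M : 'M[k]_(sumn m) => M i j) PxJ.
by rewrite jordan_nil_mxE (negbTE not_edge) -PtE -map_invmx_unit // -!map_mxM mxE.
Qed.

End UnramifiedIntegers.

Theorem mainTheorem2 (S : idomainType) (l : nat) (k : finFieldType)
    (red : {rmorphism S -> k}) (hS : unram_int_ring l red)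
    (d : nat) (x : 'M[S]_d)
    (hnil : exists n : nat, (map_mx red x) ^+ n = 0)
    (R : realFieldType) (m : seq nat) (hm : jordan_type (map_mx red x) m)
    (s : R) (hs : 0 <= s <= d%:R) :
  Np_ge (l%:R : S) (char_poly x) d s (Hp m s).
Proof.
(* [hnil] is a consequence of [hm]. *)
case: hm => m_sorted m_gt0 sum_m [P Pu PxJ]; subst d.
have [y <- dvd_y] := unram_lift_jordan hS Pu PxJ.
have [mu mu0 Hp_le] := Hp_le_some_newton_line m_sorted m_gt0 hs.
move=> eps eps0; exists (newton_line m mu); split.
  exact: newton_line_minorant (uir_nonunit hS) (unram_l_neq0 hS) m_gt0 mu0 dvd_y.
by apply: lt_le_trans Hp_le; rewrite ltrBlDr ltrDl.
Qed.
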